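(* Let $a,b$ be a parallel pair of a regular curve $M$ such that neither $a$ nor $b$ is an inflexion point. If $M$ is curved in the different sides at $a$ and $b$, then the pair $a,b$ cannot produce an asymptote of $\mathrm{CSS}(M)$.
   Context: Two distinct points $a,b\in M$ form a parallel pair if their tangent lines are parallel. $\tau_v$ denotes translation by $v$. $M$ is curved in the same side (resp. different sides) at $a$ and $b$ if the germs of $M$ and $\tau_{a-b}(M)$ at $a=\tau_{a-b}(b)$ lie on the same side (resp. different sides) of the tangent line to $M$ at $a$. The Centre Symmetry Set $\mathrm{CSS}(M)$ is the envelope of lines through parallel pairs. A parallel pair $a,b$ produces an asymptote of $\mathrm{CSS}(M)$ if, for local arc-length parameterizations $f$ near $a=f(s)$ and $g$ near $b=g(t)$ chosen with $f'(s)=-g'(t)$, one has $\kappa_f(s)+\kappa_g(t)=0$ ($\kappa$ the signed curvature); then the line through $a,b$ is an asymptote of $\mathrm{CSS}(M)$. *)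

From Stdlib Require Import Reals Lra.
From Coquelicot Require Import Coquelicot.
Open Scope R_scope.

Definition pt := (R * R)%type.

Definition vsub (p q : pt) : pt := (fst p - fst q, snd p - snd q).
Definition vadd (p q : pt) : pt := (fst p + fst q, snd p + snd q).
Definition vopp (p : pt) : pt := (- fst p, - snd p).
Definition dot (p q : pt) : R := fst p * fst q + snd p * snd q.
Definition det2 (p q : pt) : R := fst p * snd q - snd p * fst q.
Definition dist2 (p q : pt) : R := sqrt (dot (vsub p q) (vsub p q)).

Definition cx (f : R -> pt) : R -> R := fun u => fst (f u).
Definition cy (f : R -> pt) : R -> R := fun u => snd (f u).

Definition vel (f : R -> pt) (u : R) : pt := (Derive (cx f) u, Derive (cy f) u).

(* signed curvature of a (unit speed) curve: det(f', f'') = x' y'' - y' x'' *)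
Definition curvature (f : R -> pt) (u : R) : R :=
  Derive (cx f) u * Derive_n (cy f) 2 u - Derive (cy f) u * Derive_n (cx f) 2 u.

Definition local_arclength_param (M : pt -> Prop) (f : R -> pt) (s : R) (p : pt) : Prop :=
  exists lo hi : R,
    lo < s < hi /\
    f s = p /\
    (forall (n : nat) (u : R), lo < u < hi ->
        ex_derive_n (cx f) n u /\ ex_derive_n (cy f) n u) /\
    (forall u : R, lo < u < hi -> dot (vel f u) (vel f u) = 1) /\
    (forall u v : R, lo < u < hi -> lo < v < hi -> f u = f v -> u = v) /\
    (forall u : R, lo < u < hi -> M (f u)) /\
    (exists eps : R, 0 < eps /\
       forall q : pt, M q -> dist2 q p < eps -> exists u : R, lo < u < hi /\ f u = q).

Definition regular_curve (M : pt -> Prop) : Prop :=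
  forall p : pt, M p -> exists (f : R -> pt) (s : R), local_arclength_param M f s p.

Definition inflexion (M : pt -> Prop) (p : pt) : Prop :=
  exists (f : R -> pt) (s : R), local_arclength_param M f s p /\ curvature f s = 0.

Definition parallel_pair (M : pt -> Prop) (a b : pt) : Prop :=
  a <> b /\ M a /\ M b /\
  exists (f g : R -> pt) (s t : R),
    local_arclength_param M f s a /\ local_arclength_param M g t b /\
    det2 (vel f s) (vel g t) = 0.

Definition translate (v : pt) (S : pt -> Prop) : pt -> Prop :=
  fun x => exists y, S y /\ x = vadd y v.

Definition germ_on_side (S : pt -> Prop) (p n : pt) : Prop :=
  exists eps : R, 0 < eps /\
    forall x : pt, S x -> dist2 x p < eps -> 0 <= dot (vsub x p) n.

(* M is curved in different sides at a and b: the germs of M and of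
   tau_{a-b}(M) at a lie on different sides of the tangent line to M at a *)
Definition curved_different_sides (M : pt -> Prop) (a b : pt) : Prop :=
  exists (f : R -> pt) (s : R) (n : pt),
    local_arclength_param M f s a /\
    n <> (0, 0) /\ dot n (vel f s) = 0 /\
    germ_on_side M a n /\ germ_on_side (translate (vsub a b) M) a (vopp n).

Definition produces_asymptote (M : pt -> Prop) (a b : pt) : Prop :=
  exists (f g : R -> pt) (s t : R),
    local_arclength_param M f s a /\ local_arclength_param M g t b /\
    vel f s = vopp (vel g t) /\
    curvature f s + curvature g t = 0.

(* If the germ of M at p lies in the half-plane <x - p, n> >= 0 and f is a
   unit-speed parameterization with f(s) = p, then u |-> <f(u), n> has a local
   minimum at s, so n is orthogonal to f'(s) and <f''(s), n> >= 0.  Writing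
   n = c J f'(s) with J the rotation by pi/2 and c <> 0, the second condition
   reads c kappa_f(s) >= 0.  Curving in different sides gives this at a for n
   and, after translating by a - b, at b for -n; since f' = -g' both constants
   agree, so c kappa_f >= 0, c kappa_g >= 0 and kappa_f + kappa_g = 0 force
   kappa_f(s) = 0: a would be an inflexion point. *)
From Stdlib Require Import Reals Lra.
From Coquelicot Require Import Coquelicot.
Open Scope R_scope.

Lemma is_derive_local_min (phi : R -> R) (s l : R) :
  locally s (fun u => phi s <= phi u) -> is_derive phi s l -> l = 0.
Proof.
  intros [[eps Heps] Hmin] Hd.
  apply is_derive_Reals in Hd.
  rewrite <- (derive_pt_eq_0 phi s l (exist _ l Hd) Hd).
  apply (deriv_minimum phi (s - eps) (s + eps)); [lra | lra |].
  intros u Hl Hr. apply Hmin. change (Rabs (u - s) < eps). apply Rabs_def1; lra.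
Qed.

Lemma is_derive_neg_right (g : R -> R) (s l : R) :
  is_derive g s l -> g s = 0 -> l < 0 -> locally s (fun u => s < u -> g u < 0).
Proof.
  intros Hd Hs Hl.
  apply is_derive_Reals in Hd.
  destruct (Hd (- l)) as [delta Hdelta]; [lra|].
  exists delta.
  change (forall u : R, Rabs (u - s) < delta -> s < u -> g u < 0).
  intros u Hu Hsu.
  assert (Hq : Rabs ((g (s + (u - s)) - g s) / (u - s) - l) < - l).
  { apply Hdelta; [lra|exact Hu]. }
  replace (s + (u - s)) with u in Hq by ring.
  rewrite Hs, Rminus_0_r in Hq.
  apply Rabs_def2 in Hq.
  destruct (Rlt_or_le (g u) 0) as [Hneg|Hpos]; [exact Hneg|].
  assert (0 <= g u / (u - s)) by (apply Rdiv_le_0_compat; lra).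
  lra.
Qed.

(* If l < 0, then phi' < 0 just right of s, and the mean value theorem makes
   phi decrease there. *)
Lemma is_derive2_local_min (phi phi' : R -> R) (s l : R) :
  locally s (fun u => phi s <= phi u) ->
  locally s (fun u => is_derive phi u (phi' u)) ->
  is_derive phi' s l -> 0 <= l.
Proof.
  intros Hmin Hd Hd2.
  assert (Hcrit : phi' s = 0).
  { apply (is_derive_local_min phi s); [exact Hmin|].
    exact (locally_singleton _ _ Hd). }
  destruct (Rle_or_lt 0 l) as [Hl|Hl]; [exact Hl|exfalso].
  pose proof (is_derive_neg_right phi' s l Hd2 Hcrit Hl) as Hneg.
  destruct (filter_and _ _ Hmin (filter_and _ _ Hd Hneg)) as [[eps He] Hball].
  assert (Hin : forall u, s <= u <= s + eps / 2 -> ball s (mkposreal eps He) u).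
  { intros u Hu. change (Rabs (u - s) < eps). apply Rabs_def1; lra. }
  destruct (MVT_cor2 phi phi' s (s + eps / 2)) as [c [Hmvt Hc]]; [lra| |].
  - intros c Hc. apply is_derive_Reals. apply Hball, Hin. exact Hc.
  - assert (Hc_neg : phi' c < 0) by (apply Hball; [apply Hin; lra | lra]).
    assert (Hend : phi s <= phi (s + eps / 2)) by (apply Hball, Hin; lra).
    assert (phi' c * (s + eps / 2 - s) < 0) by (apply Rmult_neg_pos; lra).
    lra.
Qed.

Lemma is_derive_dot (X Y : R -> R) (n : pt) (u x' y' : R) :
  is_derive X u x' -> is_derive Y u y' ->
  is_derive (fun v => dot (X v, Y v) n) u (dot (x', y') n).
Proof.
  intros HX HY. unfold dot; simpl.
  apply (is_derive_plus (fun v => X v * fst n) (fun v => Y v * snd n));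
    apply (is_derive_scal_l (V := R_NormedModule)); assumption.
Qed.

Lemma dist2_lt (x p : pt) (e : R) :
  Rabs (fst x - fst p) < e / 2 -> Rabs (snd x - snd p) < e / 2 -> dist2 x p < e.
Proof.
  intros Hx Hy.
  assert (He : 0 < e) by (pose proof (Rabs_pos (fst x - fst p)); lra).
  apply Rabs_def2 in Hx. apply Rabs_def2 in Hy.
  assert (Sx : (fst x - fst p) * (fst x - fst p) < e / 2 * (e / 2)) by nra.
  assert (Sy : (snd x - snd p) * (snd x - snd p) < e / 2 * (e / 2)) by nra.
  unfold dist2, dot, vsub; simpl.
  rewrite <- (sqrt_Rsqr e) by lra.
  assert (0 < e * e) by (apply Rmult_lt_0_compat; lra).
  apply sqrt_lt_1_alt. unfold Rsqr. split.
  - apply Rplus_le_le_0_compat; apply Rle_0_sqr.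
  - lra.
Qed.

Lemma locally_dist2_lt (f : R -> pt) (s : R) (e : posreal) :
  ex_derive (cx f) s -> ex_derive (cy f) s ->
  locally s (fun u => dist2 (f u) (f s) < e).
Proof.
  intros Hx Hy.
  apply (filter_imp (fun u => ball (cx f s) (pos_div_2 e) (cx f u) /\
                              ball (cy f s) (pos_div_2 e) (cy f u))).
  - intros u [Bx By]. apply dist2_lt; [exact Bx | exact By].
  - apply filter_and; apply (filterlim_locally (F := locally s)).
    + exact (ex_derive_continuous (cx f) s Hx).
    + exact (ex_derive_continuous (cy f) s Hy).
Qed.

Lemma dot_vsub_l (x p n : pt) : dot (vsub x p) n = dot x n - dot p n.
Proof. unfold dot, vsub; simpl; ring. Qed.

Lemma vsub_vadd2r (x p v : pt) : vsub (vadd x v) (vadd p v) = vsub x p.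
Proof. unfold vsub, vadd; simpl; f_equal; ring. Qed.

Lemma vadd_vsub (a b : pt) : vadd b (vsub a b) = a.
Proof. destruct a, b; unfold vadd, vsub; simpl; f_equal; ring. Qed.

Lemma germ_on_side_translate (S : pt -> Prop) (p v n : pt) :
  germ_on_side (translate v S) (vadd p v) n -> germ_on_side S p n.
Proof.
  intros [eps [Heps Hside]]. exists eps. split; [exact Heps|].
  intros x Sx Hx.
  rewrite <- (vsub_vadd2r x p v).
  apply Hside; [exists x; split; [exact Sx | reflexivity]|].
  unfold dist2. rewrite vsub_vadd2r. exact Hx.
Qed.

Lemma germ_on_side_locally (M : pt -> Prop) (f : R -> pt) (s : R) (p n : pt) :
  local_arclength_param M f s p -> germ_on_side M p n ->
  locally s (fun u => dot (f s) n <= dot (f u) n).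
Proof.
  intros [lo [hi [Hs [Hfs [Hder [_ [_ [HM _]]]]]]]] [eps [Heps Hside]].
  destruct (Hder 1%nat s Hs) as [Hx Hy].
  apply (filter_imp (fun u => lo < u < hi /\ dist2 (f u) (f s) < eps)).
  - intros u [Hu Hd]. rewrite Hfs in Hd |- *.
    pose proof (Hside (f u) (HM u Hu) Hd) as Hpos.
    rewrite dot_vsub_l in Hpos. lra.
  - apply filter_and.
    + apply (locally_interval _ s lo hi); simpl; tauto.
    + exact (locally_dist2_lt f s (mkposreal eps Heps) Hx Hy).
Qed.

Definition acc (f : R -> pt) (u : R) : pt := (Derive_n (cx f) 2 u, Derive_n (cy f) 2 u).

Lemma germ_on_side_derive (M : pt -> Prop) (f : R -> pt) (s : R) (p n : pt) :
  local_arclength_param M f s p -> germ_on_side M p n ->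
  dot (vel f s) n = 0 /\ 0 <= dot (acc f s) n.
Proof.
  intros Lf Hside.
  pose proof (germ_on_side_locally M f s p n Lf Hside) as Hmin.
  destruct Lf as [lo [hi [Hs [_ [Hder _]]]]].
  assert (Hd : locally s (fun u => is_derive (fun v => dot (f v) n) u (dot (vel f u) n))).
  { apply (locally_interval _ s lo hi); [simpl; tauto | simpl; tauto |].
    intros u Hlo Hhi. destruct (Hder 1%nat u (conj Hlo Hhi)) as [Hx Hy].
    exact (is_derive_dot (cx f) (cy f) n u _ _ (Derive_correct _ _ Hx) (Derive_correct _ _ Hy)). }
  assert (Hd2 : is_derive (fun u => dot (vel f u) n) s (dot (acc f s) n)).
  { destruct (Hder 2%nat s Hs) as [Hx Hy].
    exact (is_derive_dot (Derive (cx f)) (Derive (cy f)) n s _ _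
             (Derive_correct _ _ Hx) (Derive_correct _ _ Hy)). }
  split.
  - exact (is_derive_local_min _ s _ Hmin (locally_singleton _ _ Hd)).
  - exact (is_derive2_local_min _ _ s _ Hmin Hd Hd2).
Qed.

(* For a unit vector v and n orthogonal to it, n = det2 v n * (- snd v, fst v). *)
Lemma dot_unit_orth (v n w : pt) :
  dot v v = 1 -> dot v n = 0 -> dot w n = det2 v n * det2 v w.
Proof.
  intros Hunit Horth.
  assert (E : dot w n - det2 v n * det2 v w = dot w n * (1 - dot v v) + dot v w * dot v n)
    by (unfold dot, det2; ring).
  rewrite Hunit, Horth in E. lra.
Qed.

Lemma det2_unit_orth_neq0 (v n : pt) :
  dot v v = 1 -> dot v n = 0 -> n <> (0, 0) -> det2 v n <> 0.
Proof.
  intros Hunit Horth Hn Hc.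
  pose proof (dot_unit_orth v n n Hunit Horth) as E.
  rewrite Hc, Rmult_0_l in E.
  apply Hn. destruct n as [x y]. unfold dot in E; simpl in E.
  f_equal; nra.
Qed.

Lemma germ_on_side_curvature (M : pt -> Prop) (f : R -> pt) (s : R) (p n : pt) :
  local_arclength_param M f s p -> germ_on_side M p n ->
  0 <= det2 (vel f s) n * curvature f s.
Proof.
  intros Lf Hside.
  destruct (germ_on_side_derive M f s p n Lf Hside) as [Horth Hacc].
  destruct Lf as [lo [hi [Hs [_ [_ [Hunit _]]]]]].
  rewrite (dot_unit_orth (vel f s) n (acc f s) (Hunit s Hs) Horth) in Hacc.
  exact Hacc.
Qed.

Lemma germ_on_side_normal (M : pt -> Prop) (f : R -> pt) (s : R) (p n : pt) :
  local_arclength_param M f s p -> germ_on_side M p n -> n <> (0, 0) ->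
  det2 (vel f s) n <> 0.
Proof.
  intros Lf Hside Hn.
  destruct (germ_on_side_derive M f s p n Lf Hside) as [Horth _].
  destruct Lf as [lo [hi [Hs [_ [_ [Hunit _]]]]]].
  exact (det2_unit_orth_neq0 _ _ (Hunit s Hs) Horth Hn).
Qed.

Theorem lemma4p6 (M : pt -> Prop) (a b : pt) :
  regular_curve M ->
  parallel_pair M a b ->
  ~ inflexion M a ->
  ~ inflexion M b ->
  curved_different_sides M a b ->
  ~ produces_asymptote M a b.
Proof.
  intros _ _ not_infl_a _ [f0 [s0 [n [_ [Hn [_ [side_a side_b]]]]]]]
    [f [g [s [t [Lf [Lg [Hvel Hcurv]]]]]]].
  assert (side_b' : germ_on_side M b (vopp n)).
  { apply (germ_on_side_translate M b (vsub a b)). rewrite vadd_vsub. exact side_b. }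
  pose proof (germ_on_side_curvature M f s a n Lf side_a) as sign_f.
  pose proof (germ_on_side_curvature M g t b (vopp n) Lg side_b') as sign_g.
  pose proof (germ_on_side_normal M f s a n Lf side_a Hn) as Hc.
  assert (Hcg : det2 (vel g t) (vopp n) = det2 (vel f s) n)
    by (rewrite Hvel; unfold det2, vopp; simpl; ring).
  rewrite Hcg in sign_g.
  apply not_infl_a. exists f, s. split; [exact Lf|].
  assert (Hprod : det2 (vel f s) n * curvature f s = 0).
  { assert (det2 (vel f s) n * (curvature f s + curvature g t) = 0)
      by (rewrite Hcurv; ring).
    nra. }
  destruct (Rmult_integral _ _ Hprod) as [H0|H0]; [contradiction | exact H0].
Qed.
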